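(* Let $w=(w_k)$ satisfy $w_k\ge w_0>0$ for all $k$, and let $1\le p<\infty$, $1\le q\le\infty$. Then the soft-thresholding mapping $\mathcal{S}_w:\ell^p\to\ell^q$, $\mathcal{S}_w(u)_k=\max\{0,|u_k|-w_k\}\,\mathrm{sgn}(u_k)$, is Newton differentiable at every $u\in\ell^p$, and a generalized derivative is given by $\mathcal{G}(u)\in L(\ell^p,\ell^q)$, $(\mathcal{G}(u)v)_k=v_k$ if $|u_k|>w_k$ and $(\mathcal{G}(u)v)_k=0$ if $|u_k|\le w_k$.
   Context: Let $X,Y$ be Banach spaces and $D\subset X$ open. A mapping $\mathcal{F}:D\to Y$ is called Newton (or slantly) differentiable at $x\in D$ if there exists a family of mappings $\mathcal{G}:D\to L(X,Y)$ such that $\lim_{h\to0}\|\mathcal{F}(x+h)-\mathcal{F}(x)-\mathcal{G}(x+h)h\|_Y/\|h\|_X=0$; $\mathcal{G}$ is then called a generalized derivative (slanting function) of $\mathcal{F}$ at $x$. $\ell^p$ denotes the space of $p$-summable real sequences ($\ell^\infty$ the bounded sequences) with the usual norm. *)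

From HB Require Import structures.
From mathcomp Require Import all_boot all_order all_algebra.
From mathcomp Require Import all_classical all_reals all_analysis.
Set Implicit Arguments. Unset Strict Implicit. Unset Printing Implicit Defensive.
Import Order.TTheory GRing.Theory Num.Theory.
Import numFieldNormedType.Exports.
Local Open Scope classical_set_scope.
Local Open Scope ring_scope.

Section Lp.
Variable R : realType.

Definition lp_mem (p : R) (u : nat -> R) : Prop :=
  cvgn (series (fun k => `|u k| `^ p)).

Definition lp_norm (p : R) (u : nat -> R) : R :=
  (limn (series (fun k => `|u k| `^ p))) `^ (p^-1).

Definition linf_mem (u : nat -> R) : Prop :=
  exists M : R, forall k, `|u k| <= M.

Definition linf_norm (u : nat -> R) : R :=
  sup (range (fun k => `|u k|)).

Definition lq_mem (q : \bar R) (u : nat -> R) : Prop :=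
  match q with
  | EFin r => lp_mem r u
  | _ => linf_mem u
  end.

Definition lq_norm (q : \bar R) (u : nat -> R) : R :=
  match q with
  | EFin r => lp_norm r u
  | _ => linf_norm u
  end.

Definition soft_threshold (w : nat -> R) (u : nat -> R) : nat -> R :=
  fun k => Num.max 0 (`|u k| - w k) * Num.sg (u k).

Definition soft_threshold_G (w : nat -> R) (u : nat -> R) (v : nat -> R) : nat -> R :=
  fun k => if w k < `|u k| then v k else 0.

Definition bounded_linear_lp_lq (p : R) (q : \bar R) (A : (nat -> R) -> (nat -> R)) : Prop :=
  (forall (a b : R) (v v' : nat -> R), lp_mem p v -> lp_mem p v' ->
      A (fun k => a * v k + b * v' k) = (fun k => a * A v k + b * A v' k))
  /\ (forall v, lp_mem p v -> lq_mem q (A v))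
  /\ (exists C : R, forall v, lp_mem p v -> lq_norm q (A v) <= C * lp_norm p v).

Definition newton_differentiable_lp_lq (p : R) (q : \bar R)
    (F : (nat -> R) -> (nat -> R)) (G : (nat -> R) -> (nat -> R) -> (nat -> R))
    (x : nat -> R) : Prop :=
  (forall y, lp_mem p y -> bounded_linear_lp_lq p q (G y)) /\
  (forall eps : R, 0 < eps -> exists delta : R, 0 < delta /\
     forall h, lp_mem p h -> 0 < lp_norm p h < delta ->
       lq_norm q (fun k => F (fun j => x j + h j) k - F x k
                             - G (fun j => x j + h j) h k)
         <= eps * lp_norm p h).

End Lp.

(* Since u is p-summable, |u_k| < w0/2 <= w_k/2 for all but finitely many k.
   Hence S_w(u) and every G(y)v are finitely supported with entries bounded
   by the l^p norm, which gives membership in l^q and boundedness of G(y).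
   For the Newton property, the scalar soft-threshold is affine on each of
   the closed pieces (-oo, -w], [-w, w], [w, +oo); each coordinate u_k has a
   positive radius within which a perturbation stays in a piece containing
   u_k, and for k past the finite exceptional set this radius exceeds w0/2.
   So for |h|_p below the minimum of finitely many radii and w0/2 the
   residual S_w(u+h) - S_w(u) - G(u+h)h vanishes identically. *)

From mathcomp Require Import all_boot all_order all_algebra.
From mathcomp Require Import all_classical all_reals all_analysis.
From mathcomp Require Import lra.
Set Implicit Arguments. Unset Strict Implicit. Unset Printing Implicit Defensive.
Import Order.TTheory GRing.Theory Num.Theory.
Import numFieldNormedType.Exports.
Local Open Scope ring_scope.

Section soft_threshold_scalar.
Variable R : realType.
Implicit Types w a t : R.

Definition soft w a : R := Num.max 0 (`|a| - w) * Num.sg a.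

Lemma softE w a : 0 <= w ->
  soft w a = if w < a then a - w else if a < - w then a + w else 0.
Proof.
move=> w_ge0; rewrite /soft.
case: (ltrgtP a 0) => [a_lt0|a_gt0|->].
- by rewrite ltr0_norm // ltr0_sg // mulrN1 /Order.max; repeat case: ifP => ?; lra.
- by rewrite gtr0_norm // gtr0_sg // mulr1 /Order.max; repeat case: ifP => ?; lra.
- by rewrite sgr0 mulr0; repeat case: ifP => ?; lra.
Qed.

Lemma soft_eq0 w a : `|a| <= w -> soft w a = 0.
Proof. by move=> aw; rewrite /soft max_l ?mul0r // subr_le0. Qed.

Lemma norm_soft_le w a : 0 <= w -> `|soft w a| <= `|a|.
Proof.
move=> w_ge0; rewrite softE // ler_norml.
by case: (lerP 0 a) => ha; [rewrite ger0_norm|rewrite ltr0_norm]; repeat case: ifP; lra.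
Qed.

(* Perturbations of [a] smaller than this radius cross no kink of [soft w]
   except possibly one sitting at [a] itself, which is harmless because
   [soft w] is affine on each closed side of a kink. *)
Definition soft_exact_radius w a : R := if `|a| == w then w else `| `|a| - w |.

Lemma soft_exact_radius_gt0 w a : 0 < w -> 0 < soft_exact_radius w a.
Proof.
by move=> w_gt0; rewrite /soft_exact_radius; case: eqP => // /eqP; rewrite normr_gt0 subr_eq0.
Qed.

Lemma soft_exact_radius_ge w a : `|a| < w -> w - `|a| <= soft_exact_radius w a.
Proof.
move=> a_lt; have wa_ge0 : 0 <= w - `|a| by rewrite subr_ge0 ltW.
by rewrite /soft_exact_radius (lt_eqF a_lt) distrC (ger0_norm wa_ge0).
Qed.

Lemma softN w a : soft w (- a) = - soft w a.
Proof. by rewrite /soft normrN sgrN mulrN. Qed.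

Lemma soft_residual_eq0 w a t : 0 < w -> `|t| < soft_exact_radius w a ->
  soft w (a + t) - soft w a - (if w < `|a + t| then t else 0) = 0.
Proof.
move=> w_gt0; wlog a_ge0 : a t / 0 <= a => [hwlog|].
  case: (lerP 0 a) => [|a_lt0 ht]; first exact: hwlog.
  have na_ge0 : 0 <= - a by rewrite oppr_ge0 ltW.
  have := hwlog (- a) (- t) na_ge0.
  rewrite /soft_exact_radius !normrN -opprD !softN normrN => /(_ ht).
  by case: ifP => _; lra.
rewrite /soft_exact_radius !softE ?ltW // (ger0_norm a_ge0).
have : - `|t| <= t <= `|t| by rewrite -ler_norml.
case: (lerP 0 (a + t)) => hat; [rewrite (ger0_norm hat)|rewrite (ltr0_norm hat)];
case: eqP => ?; try (case: (lerP 0 (a - w)) => haw; [rewrite (ger0_norm haw)|rewrite (ltr0_norm haw)]);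
move=> ? ?; repeat case: ifP => ?; lra.
Qed.

End soft_threshold_scalar.

Section lp_sequences.
Variable R : realType.
Implicit Types (u v f : R^nat) (p r B : R) (N : nat).
Local Open Scope classical_set_scope.

Lemma nondecreasing_series_nneg f : (forall k, 0 <= f k) -> nondecreasing_seq (series f).
Proof. by move=> f_ge0; apply: (@nondecreasing_series _ f xpredT 0) => n _ _. Qed.

Lemma lp_norm_ge0 p v : 0 <= lp_norm p v.
Proof. exact: powR_ge0. Qed.

Lemma coord_le_lp_norm p v : 0 < p -> lp_mem p v -> forall k, `|v k| <= lp_norm p v.
Proof.
move=> p_gt0 v_lp k; set g := fun k => `|v k| `^ p.
have g_ge0 k' : 0 <= g k' by exact: powR_ge0.
have gk_le : g k <= limn (series g).
  apply: (le_trans _ (nondecreasing_cvgn_le (nondecreasing_series_nneg g_ge0) v_lp k.+1)).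
  by rewrite seriesSr lerDr sumr_ge0.
have -> : `|v k| = g k `^ p^-1 by rewrite -powRrM mulfV ?powRr1 ?gt_eqF.
apply: ge0_ler_powR => //.
- by rewrite invr_ge0 ltW.
- exact: g_ge0.
- by rewrite nnegrE (le_trans (g_ge0 k)).
Qed.

Lemma lp_mem_eventually_lt p u : 0 < p -> lp_mem p u ->
  forall c, 0 < c -> exists N, forall k, (N <= k)%N -> `|u k| < c.
Proof.
move=> p_gt0 u_lp c c_gt0.
have /cvgrPdist_lt/(_ (c `^ p) (powR_gt0 _ c_gt0)) [N _ HN] := cvg_series_cvg_0 u_lp.
exists N => k /HN; rewrite sub0r normrN ger0_norm ?powR_ge0 //.
apply: contraTT; rewrite -!leNgt => c_le.
by apply: ge0_ler_powR; rewrite ?nnegrE // ltW.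
Qed.

Lemma lp_finsupp r f N B : 0 < r -> 0 <= B ->
  (forall k, (N <= k)%N -> f k = 0) -> (forall k, `|f k| <= B) ->
  lp_mem r f /\ lp_norm r f <= N%:R `^ r^-1 * B.
Proof.
move=> r_gt0 B_ge0 f_eq0 f_le; set g := fun k => `|f k| `^ r.
have series_cst : \forall n \near \oo, series g n = series g N.
  exists N => // n /= Nn.
  rewrite /series /= (big_cat_nat (leq0n N) Nn) /= -[RHS]addr0; congr (_ + _).
  rewrite big_nat big1 // => k /andP[Nk _].
  by rewrite /g f_eq0 // normr0 powR0 ?gt_eqF.
have lim_g := norm_lim_near_cst series_cst.
split; first exact: is_cvg_near_cst _ series_cst.
have gN_le : series g N <= N%:R * B `^ r.
  rewrite /series /= mulr_natl -[X in _ *+ X]subn0 -sumr_const_nat ler_sum // => k _.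
  by apply: ge0_ler_powR; rewrite ?nnegrE ?(ltW r_gt0) ?f_le.
rewrite /lp_norm lim_g; apply: le_trans (_ : (N%:R * B `^ r) `^ r^-1 <= _).
  apply: ge0_ler_powR => //.
  - by rewrite invr_ge0 ltW.
  - by rewrite nnegrE /series sumr_ge0 // => k _; exact: powR_ge0.
  - by rewrite nnegrE mulr_ge0 ?powR_ge0.
by rewrite powRM ?powR_ge0 // -powRrM mulfV ?gt_eqF // powRr1.
Qed.

Lemma linf_bounded f B : (forall k, `|f k| <= B) -> linf_mem f /\ linf_norm f <= B.
Proof.
move=> f_le; split; first by exists B.
by apply: ge_sup => [|_ [k _ <-]]; first exists `|f 0%N|, 0%N.
Qed.

Definition finsupp_norm_const (q : \bar R) N : R :=
  match q with EFin r => N%:R `^ r^-1 | _ => 1 end.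

Lemma lq_finsupp (q : \bar R) f N B : (0 < q)%E -> 0 <= B ->
  (forall k, (N <= k)%N -> f k = 0) -> (forall k, `|f k| <= B) ->
  lq_mem q f /\ lq_norm q f <= finsupp_norm_const q N * B.
Proof.
case: q => [r||] //= r_gt0; first exact: lp_finsupp.
by move=> _ _ /linf_bounded; rewrite mul1r.
Qed.

Lemma lq_norm_zero (q : \bar R) : (0 < q)%E -> lq_norm q (fun _ => 0) = 0.
Proof.
move=> q_gt0; apply/le_anti/andP; split.
  have zero_le (k : nat) : `|(fun=> 0 : R) k| <= 0 by rewrite normr0.
  have [_] := @lq_finsupp q (fun=> 0) 0 0 q_gt0 (lexx 0) (fun _ _ => erefl) zero_le.
  by rewrite mulr0.
case: q q_gt0 => [r||] //= _; first exact: powR_ge0.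
rewrite /linf_norm normr0 (_ : range _ = [set 0]) ?sup1 //.
by apply/seteqP; split=> [_ [_ _ <-]|_ ->] //; exists 0%N.
Qed.

Lemma pos_lbound_prefix (g : R^nat) N : (forall k, 0 < g k) ->
  exists2 d, 0 < d & forall k, (k < N)%N -> d <= g k.
Proof.
move=> g_gt0; elim: N => [|N [d d_gt0 d_le]]; first by exists 1.
exists (Num.min d (g N)); first by rewrite lt_min d_gt0 g_gt0.
move=> k; rewrite ltnS leq_eqVlt => /predU1P[->|/d_le d_le_k].
  by rewrite ge_min lexx orbT.
by rewrite ge_min d_le_k.
Qed.

End lp_sequences.

Section soft_threshold_lp.
Variables (R : realType) (w : R^nat) (w0 p : R).
Hypotheses (w0_gt0 : 0 < w0) (w0_le : forall k, w0 <= w k) (p_gt0 : 0 < p).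

Let w_gt0 k : 0 < w k := lt_le_trans w0_gt0 (w0_le k).

Lemma soft_thresholdE u k : soft_threshold w u k = soft (w k) (u k).
Proof. by []. Qed.

Lemma soft_threshold_finsupp u : lp_mem p u ->
  exists N, forall k, (N <= k)%N -> soft_threshold w u k = 0.
Proof.
move=> u_lp; have [N u_small] := lp_mem_eventually_lt p_gt0 u_lp w0_gt0.
by exists N => k /u_small uk; rewrite soft_thresholdE soft_eq0 // ltW // (lt_le_trans uk).
Qed.

Lemma soft_threshold_G_finsupp y : lp_mem p y ->
  exists N, forall v k, (N <= k)%N -> soft_threshold_G w y v k = 0.
Proof.
move=> y_lp; have [N y_small] := lp_mem_eventually_lt p_gt0 y_lp w0_gt0.
by exists N => v k /y_small yk; rewrite /soft_threshold_G ltNge ltW // (lt_le_trans yk).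
Qed.

Lemma norm_soft_threshold_G_le y v k : `|soft_threshold_G w y v k| <= `|v k|.
Proof. by rewrite /soft_threshold_G; case: ifP; rewrite ?normr0. Qed.

Lemma soft_threshold_lq_mem q u : (0 < q)%E -> lp_mem p u ->
  lq_mem q (soft_threshold w u).
Proof.
move=> q_gt0 u_lp; have [N S_eq0] := soft_threshold_finsupp u_lp.
apply: (proj1 (lq_finsupp (N := N) q_gt0 (lp_norm_ge0 p u) S_eq0 _)) => k.
exact: le_trans (norm_soft_le _ (ltW (w_gt0 k))) (coord_le_lp_norm p_gt0 u_lp k).
Qed.

Lemma soft_threshold_G_bounded_linear q y : (0 < q)%E -> lp_mem p y ->
  bounded_linear_lp_lq p q (soft_threshold_G w y).
Proof.
move=> q_gt0 y_lp; have [N G_eq0] := soft_threshold_G_finsupp y_lp.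
have G_lq v : lp_mem p v -> lq_mem q (soft_threshold_G w y v) /\
    lq_norm q (soft_threshold_G w y v) <= finsupp_norm_const q N * lp_norm p v.
  move=> v_lp; apply: lq_finsupp (lp_norm_ge0 p v) (G_eq0 v) _ => // k.
  exact: le_trans (norm_soft_threshold_G_le y v k) (coord_le_lp_norm p_gt0 v_lp k).
split; [|split].
- move=> a b v v' _ _; apply/funext => k; rewrite /soft_threshold_G.
  by case: ifP => // _; rewrite !mulr0 addr0.
- by move=> v /G_lq[].
- by exists (finsupp_norm_const q N) => v /G_lq[].
Qed.

Lemma soft_threshold_residual_eq0 u : lp_mem p u ->
  exists2 delta, 0 < delta & forall h, lp_mem p h -> lp_norm p h < delta ->
    forall k, soft_threshold w (fun j => u j + h j) k - soft_threshold w u k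
              - soft_threshold_G w (fun j => u j + h j) h k = 0.
Proof.
move=> u_lp; have w02_gt0 : 0 < w0 / 2 by rewrite divr_gt0.
have [N u_small] := lp_mem_eventually_lt p_gt0 u_lp w02_gt0.
have [d d_gt0 d_le] :=
  pos_lbound_prefix N (fun k => soft_exact_radius_gt0 (u k) (w_gt0 k)).
exists (Num.min d (w0 / 2)) => [|h h_lp]; first by rewrite lt_min d_gt0.
rewrite lt_min => /andP[h_lt_d h_lt_w02] k.
apply: soft_residual_eq0 => //; have hk_le := coord_le_lp_norm p_gt0 h_lp k.
case: (ltnP k N) => [/d_le d_le_k|/u_small uk]; first lra.
have := soft_exact_radius_ge (lt_trans uk (lt_le_trans _ (w0_le k))).
by have := w0_le k; lra.
Qed.

End soft_threshold_lp.

Theorem proposition3p3 (R : realType) (w : nat -> R) (w0 : R)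
    (hw0 : 0 < w0) (hw : forall k, w0 <= w k)
    (p : R) (q : \bar R) (hp : 1 <= p) (hq : (1%:E <= q)%E) :
  (forall u, lp_mem p u -> lq_mem q (soft_threshold w u)) /\
  (forall u, lp_mem p u ->
     newton_differentiable_lp_lq p q (soft_threshold w) (soft_threshold_G w) u).
Proof.
have p_gt0 : 0 < p := lt_le_trans ltr01 hp.
have q_gt0 : (0 < q)%E := lt_le_trans lte01 hq.
split=> [u u_lp|u u_lp].
  by have := soft_threshold_lq_mem hw0 hw p_gt0 q_gt0 u_lp.
split=> [y y_lp|eps eps_gt0].
  by have := soft_threshold_G_bounded_linear hw0 hw p_gt0 q_gt0 y_lp.
have [delta delta_gt0 residual_eq0] := soft_threshold_residual_eq0 hw0 hw p_gt0 u_lp.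
exists delta; split=> // h h_lp /andP[h_gt0 h_lt].
rewrite (funext (residual_eq0 h h_lp h_lt)) lq_norm_zero //.
by rewrite mulr_ge0 ?ltW.
Qed.
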